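(* Let $r,p,\Delta>0$ be fixed integers and suppose that sequences $\{\xi_{s,t}\}_{s,t\ge0}\subseteq\mathbb{N}$ and $\{k_i\}_{i\ge0}\subseteq\mathbb{N}$ satisfy $$k_{s+t+r}=k_s+k_t+p-\Delta\xi_{s,t}\quad\text{for all } s,t\ge0.$$ Then $\xi_{s,0}=\xi_{0,s}$ for all $s\ge0$, and for all $i\ge0$, $0\le j<r$: $$rk_{ir+j}=((i+1)r+j)k_0+(ir+j)p-\Delta\Big(\tau_j+r\sum_{s=0}^{i-1}\xi_{0,sr+j}\Big),$$ where $$\tau_j=j\xi_{0,0}+j\sum_{s=1}^{r-1}(\xi_{0,s+1}-\xi_{1,s})-r\sum_{s=1}^{j-1}(\xi_{0,s+1}-\xi_{1,s}),\quad 0\le j<r.$$ Moreover, for all $a,c\ge0$ and $0\le b,d<r$: if $b+d<r$, then $$\xi_{ar+b,cr+d}=\sum_{s=1}^{b-1}(\xi_{0,s+1}-\xi_{1,s})+\sum_{s=1}^{d-1}(\xi_{0,s+1}-\xi_{1,s})-\sum_{s=1}^{b+d-1}(\xi_{0,s+1}-\xi_{1,s})+\sum_{s=0}^{a+c}\xi_{0,sr+b+d}-\sum_{s=0}^{a-1}\xi_{0,sr+b}-\sum_{s=0}^{c-1}\xi_{0,sr+d};$$ and if $b+d\ge r$, then $$\xi_{ar+b,cr+d}=\sum_{s=1}^{b-1}(\xi_{0,s+1}-\xi_{1,s})+\sum_{s=1}^{d-1}(\xi_{0,s+1}-\xi_{1,s})-\sum_{s=1}^{b+d-r-1}(\xi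_{0,s+1}-\xi_{1,s})+\sum_{s=0}^{a+c+1}\xi_{0,sr+b+d-r}-\sum_{s=0}^{a-1}\xi_{0,sr+b}-\sum_{s=0}^{c-1}\xi_{0,sr+d}-\xi_{0,0}-\sum_{s=1}^{r-1}(\xi_{0,s+1}-\xi_{1,s}).$$
   Context: $\mathbb{N}$ includes $0$. A sum $\sum_{i=a}^b$ with $b<a$ is zero. *)

From mathcomp Require Import all_boot all_order all_algebra.
Set Implicit Arguments. Unset Strict Implicit. Unset Printing Implicit Defensive.
Import Order.TTheory GRing.Theory Num.Theory.
Local Open Scope ring_scope.

Definition dxi (xi : nat -> nat -> nat) (s : nat) : int :=
  (xi 0%N s.+1)%:Z - (xi 1%N s)%:Z.

Definition tau (xi : nat -> nat -> nat) (r j : nat) : int :=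
  (j%:Z) * (xi 0%N 0%N)%:Z
  + (j%:Z) * (\sum_(1 <= s < r) dxi xi s)
  - (r%:Z) * (\sum_(1 <= s < j) dxi xi s).

From mathcomp Require Import all_boot all_order all_algebra.
From mathcomp Require Import zify ring.

Set Implicit Arguments.
Unset Strict Implicit.
Unset Printing Implicit Defensive.
Import Order.TTheory GRing.Theory Num.Theory.
Local Open Scope ring_scope.

(* The recurrence is symmetric in s and t, so xi is symmetric.  Taking t = 1
   and comparing with (s + 1, 0) gives the first differences
   k_{s+1} - k_s = (k_1 - k_0) + Delta (xi_{0,s+1} - xi_{1,s}), and taking
   t = 0 gives the drift k_{s+r} = k_s + k_0 + p - Delta xi_{0,s}.  Hence every
   k_n is explicit in k_0, k_1 and xi; computing k_r in both ways eliminates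
   k_1, and each xi_{s,t} is then read off the recurrence itself. *)

Section KRecurrence.

Variables (r p Delta : nat) (xi : nat -> nat -> nat) (k : nat -> nat).
Hypothesis Delta_gt0 : (0 < Delta)%N.
Hypothesis k_rec : forall s t : nat,
  (k (s + t + r)%N)%:Z = (k s)%:Z + (k t)%:Z + p%:Z - Delta%:Z * (xi s t)%:Z.

Let Delta_neq0 : Delta%:Z != 0.
Proof. by rewrite eqz_nat -lt0n. Qed.

Let slope : int := (k 1%N)%:Z - (k 0%N)%:Z.

Lemma xiC s t : xi s t = xi t s.
Proof.
have := k_rec t s; rewrite (addnC t s) k_rec => eq_st.
have : Delta%:Z * (xi s t)%:Z = Delta%:Z * (xi t s)%:Z by lia.
by move/(mulfI Delta_neq0)/eqP; rewrite eqz_nat => /eqP.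
Qed.

Lemma dxi0 : dxi xi 0 = 0.
Proof. by rewrite /dxi xiC subrr. Qed.

Lemma sum_dxi_from0 j : \sum_(1 <= s < j) dxi xi s = \sum_(0 <= s < j) dxi xi s.
Proof.
case: j => [|j]; first by rewrite !big_geq.
by rewrite [RHS]big_ltn // dxi0 add0r.
Qed.

Lemma k_succ s : (k s.+1)%:Z = (k s)%:Z + slope + Delta%:Z * dxi xi s.
Proof.
have := k_rec s 1%N; have := k_rec s.+1 0%N.
rewrite addn0 addn1 /slope /dxi (xiC 1%N s) (xiC s.+1 0%N) => ->.
lia.
Qed.

Lemma k_small j :
  (k j)%:Z = (k 0%N)%:Z + j%:Z * slope + Delta%:Z * \sum_(1 <= s < j) dxi xi s.
Proof.
rewrite sum_dxi_from0; elim: j => [|j IHj].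
  by rewrite big_geq // mul0r mulr0 !addr0.
by rewrite k_succ IHj big_nat_recr //= -addn1 PoszD; ring.
Qed.

Lemma k_shift i j :
  (k (i * r + j)%N)%:Z = (k j)%:Z + i%:Z * ((k 0%N)%:Z + p%:Z)
    - Delta%:Z * \sum_(0 <= s < i) (xi 0%N (s * r + j)%N)%:Z.
Proof.
elim: i => [|i IHi]; first by rewrite mul0n big_geq // mul0r mulr0 addr0 subr0.
have -> : (i.+1 * r + j = i * r + j + 0 + r)%N by rewrite mulSn; lia.
by rewrite k_rec IHi big_nat_recr //= xiC -addn1 PoszD; ring.
Qed.

Lemma r_slope :
  r%:Z * slope = (k 0%N)%:Z + p%:Z - Delta%:Z * (xi 0%N 0%N)%:Z
                 - Delta%:Z * \sum_(1 <= s < r) dxi xi s.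
Proof. by have := k_rec 0 0; rewrite !add0n k_small; lia. Qed.

Lemma r_k_closed_form i j :
  r%:Z * (k (i * r + j)%N)%:Z =
    ((i.+1 * r + j)%N)%:Z * (k 0%N)%:Z + ((i * r + j)%N)%:Z * p%:Z
    - Delta%:Z * (tau xi r j + r%:Z * (\sum_(0 <= s < i) (xi 0%N (s * r + j)%N)%:Z)).
Proof.
rewrite k_shift k_small /tau !PoszD !PoszM.
have := r_slope; set S := \sum_(1 <= s < r) _ => slopeE.
have jslopeE : j%:Z * (r%:Z * slope) = j%:Z * ((k 0%N)%:Z + p%:Z
                 - Delta%:Z * (xi 0%N 0%N)%:Z - Delta%:Z * S) by rewrite slopeE.
nia.
Qed.

(* Any decomposition s + t + r = m r + e of the left-hand index yields xi_{s,t}. *)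
Lemma Delta_xi_blocks a b c d m e : (a * r + b + (c * r + d) + r = m * r + e)%N ->
  Delta%:Z * (xi (a * r + b)%N (c * r + d)%N)%:Z =
    (a%:Z + c%:Z + 1 - m%:Z) * ((k 0%N)%:Z + p%:Z) + (b%:Z + d%:Z - e%:Z) * slope
    + Delta%:Z * (\sum_(1 <= s < b) dxi xi s + \sum_(1 <= s < d) dxi xi s
                  - \sum_(1 <= s < e) dxi xi s
                  + \sum_(0 <= s < m) (xi 0%N (s * r + e)%N)%:Z
                  - \sum_(0 <= s < a) (xi 0%N (s * r + b)%N)%:Z
                  - \sum_(0 <= s < c) (xi 0%N (s * r + d)%N)%:Z).
Proof.
move=> decomp.
have -> : Delta%:Z * (xi (a * r + b)%N (c * r + d)%N)%:Z =
  (k (a * r + b)%N)%:Z + (k (c * r + d)%N)%:Z + p%:Z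
  - (k (a * r + b + (c * r + d) + r)%N)%:Z by rewrite k_rec; ring.
by rewrite decomp !k_shift (k_small b) (k_small d) (k_small e); ring.
Qed.

Lemma xi_blocks a b c d :
  (xi (a * r + b)%N (c * r + d)%N)%:Z =
    \sum_(1 <= s < b) dxi xi s + \sum_(1 <= s < d) dxi xi s
    - \sum_(1 <= s < b + d) dxi xi s
    + \sum_(0 <= s < (a + c).+1) (xi 0%N (s * r + (b + d))%N)%:Z
    - \sum_(0 <= s < a) (xi 0%N (s * r + b)%N)%:Z
    - \sum_(0 <= s < c) (xi 0%N (s * r + d)%N)%:Z.
Proof.
apply: (mulfI Delta_neq0); rewrite (@Delta_xi_blocks _ _ _ _ (a + c).+1 (b + d));
  last by rewrite mulSn; lia.
rewrite -addn1 !PoszD; ring.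
Qed.

Lemma xi_blocks_carry a b c d : (r <= b + d)%N ->
  (xi (a * r + b)%N (c * r + d)%N)%:Z =
    \sum_(1 <= s < b) dxi xi s + \sum_(1 <= s < d) dxi xi s
    - \sum_(1 <= s < b + d - r) dxi xi s
    + \sum_(0 <= s < (a + c).+2) (xi 0%N (s * r + (b + d - r))%N)%:Z
    - \sum_(0 <= s < a) (xi 0%N (s * r + b)%N)%:Z
    - \sum_(0 <= s < c) (xi 0%N (s * r + d)%N)%:Z
    - (xi 0%N 0%N)%:Z
    - \sum_(1 <= s < r) dxi xi s.
Proof.
move=> le_r_bd; apply: (mulfI Delta_neq0).
rewrite (@Delta_xi_blocks _ _ _ _ (a + c).+2 (b + d - r)); last by rewrite !mulSn; lia.
have -> : ((b + d - r)%N = b%:Z + d%:Z - r%:Z :> int) by rewrite -PoszD; lia.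
have := r_slope; rewrite -addn2 !PoszD => slopeE.
nia.
Qed.

End KRecurrence.

Theorem lemma2p7 (r p Delta : nat) (xi : nat -> nat -> nat) (k : nat -> nat) :
  (0 < r)%N -> (0 < p)%N -> (0 < Delta)%N ->
  (forall s t : nat,
      (k (s + t + r)%N)%:Z = (k s)%:Z + (k t)%:Z + p%:Z - Delta%:Z * (xi s t)%:Z) ->
  (forall s : nat, xi s 0%N = xi 0%N s)
  /\ (forall i j : nat, (j < r)%N ->
        r%:Z * (k (i * r + j)%N)%:Z =
          ((i.+1 * r + j)%N)%:Z * (k 0%N)%:Z + ((i * r + j)%N)%:Z * p%:Z
          - Delta%:Z * (tau xi r j
                        + r%:Z * (\sum_(0 <= s < i) (xi 0%N (s * r + j)%N)%:Z)))
  /\ (forall a b c d : nat, (b < r)%N -> (d < r)%N ->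
        ((b + d < r)%N ->
         (xi (a * r + b)%N (c * r + d)%N)%:Z =
           \sum_(1 <= s < b) dxi xi s + \sum_(1 <= s < d) dxi xi s
           - \sum_(1 <= s < b + d) dxi xi s
           + \sum_(0 <= s < (a + c).+1) (xi 0%N (s * r + (b + d))%N)%:Z
           - \sum_(0 <= s < a) (xi 0%N (s * r + b)%N)%:Z
           - \sum_(0 <= s < c) (xi 0%N (s * r + d)%N)%:Z)
        /\
        ((r <= b + d)%N ->
         (xi (a * r + b)%N (c * r + d)%N)%:Z =
           \sum_(1 <= s < b) dxi xi s + \sum_(1 <= s < d) dxi xi s
           - \sum_(1 <= s < b + d - r) dxi xi s
           + \sum_(0 <= s < (a + c).+2) (xi 0%N (s * r + (b + d - r))%N)%:Z
           - \sum_(0 <= s < a) (xi 0%N (s * r + b)%N)%:Z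
           - \sum_(0 <= s < c) (xi 0%N (s * r + d)%N)%:Z
           - (xi 0%N 0%N)%:Z
           - \sum_(1 <= s < r) dxi xi s)).
Proof.
move=> _ _ Delta_gt0 k_rec; split; first by move=> s; rewrite (xiC Delta_gt0 k_rec).
split; first by move=> i j _; exact: (r_k_closed_form Delta_gt0 k_rec).
move=> a b c d _ _.
by split; [move=> _; exact: (xi_blocks Delta_gt0 k_rec) | exact: (xi_blocks_carry Delta_gt0 k_rec)].
Qed.
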